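(* Let $\mathcal K$ be a class of algebras of type $F$ generating a variety $\mathcal V$ (i.e. $\mathsf V(\mathcal K)=\mathcal V$). Then the variety $\mathcal V_\tau$ of all state-morphism algebras $(\mathbf A,\tau)$ with $\mathbf A\in\mathcal V$ is generated by the class $\{D(\mathbf A):\mathbf A\in\mathcal K\}$.
   Context: A state-morphism on an algebra $\mathbf A$ of type $F$ is an endomorphism $\tau$ of $\mathbf A$ with $\tau\circ\tau=\tau$; $(\mathbf A,\tau)$ is a state-morphism algebra (type $F$ plus one unary operation). For an algebra $\mathbf A$ of type $F$, $D(\mathbf A)=(\mathbf A\times\mathbf A,\tau_A)$ with $\tau_A(x,y)=(x,x)$ is the diagonal state-morphism algebra. *)

From mathcomp Require Import all_boot.
Set Implicit Arguments. Unset Strict Implicit. Unset Printing Implicit Defensive.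

Record signature := Signature { op_sym :> Type; arity : op_sym -> nat }.

Record algebra (F : signature) := Algebra {
  carrier :> Type;
  interp : forall f : F, ('I_(arity f) -> carrier) -> carrier }.

Inductive term (F : signature) : Type :=
| Var : nat -> term F
| App : forall f : F, ('I_(arity f) -> term F) -> term F.

Fixpoint eval (F : signature) (A : algebra F) (v : nat -> A) (t : term F) : A :=
  match t with
  | Var n => v n
  | App f args => @interp F A f (fun i => eval v (args i))
  end.

Definition satisfies (F : signature) (A : algebra F) (e : term F * term F) : Prop :=
  forall v : nat -> A, eval v e.1 = eval v e.2.

Definition alg_class (F : signature) := algebra F -> Prop.

Definition Id_of (F : signature) (K : alg_class F) (e : term F * term F) : Prop :=
  forall A, K A -> satisfies A e.

(* V(K): the variety generated by K (= Mod Id K, the smallest equational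
   class containing K). *)
Definition V_gen (F : signature) (K : alg_class F) : alg_class F :=
  fun A => forall e, Id_of K e -> satisfies A e.

(* Type F plus one unary operation tau (the symbol [None]). *)
Definition sig_tau (F : signature) : signature :=
  @Signature (option F) (fun o => match o with Some f => arity f | None => 1 end).

Definition reduct (F : signature) (B : algebra (sig_tau F)) : algebra F :=
  @Algebra F B (fun f args => @interp _ B (Some f) args).

Definition tau_op (F : signature) (B : algebra (sig_tau F)) (x : B) : B :=
  @interp _ B None (fun _ => x).

Definition is_state_morphism_algebra (F : signature) (B : algebra (sig_tau F)) : Prop :=
  (forall (f : F) (args : 'I_(arity f) -> B),
      tau_op (@interp _ B (Some f) args) = @interp _ B (Some f) (fun i => tau_op (args i)))
  /\ (forall x : B, tau_op (tau_op x) = tau_op x).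

Definition V_tau (F : signature) (V : alg_class F) : alg_class (sig_tau F) :=
  fun B => is_state_morphism_algebra B /\ V (reduct B).

Definition D_interp (F : signature) (A : algebra F) (o : option F) :
  ('I_(@arity (sig_tau F) o) -> A * A) -> A * A :=
  match o as o0 return ('I_(@arity (sig_tau F) o0) -> A * A) -> A * A with
  | Some f => fun args => (@interp F A f (fun i => (args i).1), @interp F A f (fun i => (args i).2))
  | None => fun args => ((args ord0).1, (args ord0).1)
  end.

Definition D_alg (F : signature) (A : algebra F) : algebra (sig_tau F) :=
  @Algebra (sig_tau F) (A * A)%type (@D_interp F A).

Definition D_class (F : signature) (K : alg_class F) : alg_class (sig_tau F) :=
  fun B => exists A, K A /\ B = D_alg A.

(** A term of type F + tau is interpreted in a state-morphism algebra (A, tau)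
    by an F-term over the doubled variable set {x_n, tau x_n}: since tau is an
    idempotent endomorphism, it can be pushed down to the variables, where
    tau tau x = tau x.  The same translation computes terms in D(A), with the
    two coordinates of the n-th variable playing the roles of tau x_n and x_n.
    Hence an identity of all D(A), A in K, yields an F-identity of K, which
    holds in the F-reduct of any member of V_tau.  Conversely, the identities
    defining state-morphism algebras hold in every D(A), and F-identities of K
    lift to identities of the D(A). *)
From mathcomp Require Import all_boot.
From Stdlib Require Import FunctionalExtensionality.

Set Implicit Arguments.
Unset Strict Implicit.
Unset Printing Implicit Defensive.

Section StateMorphismTerms.
Variable F : signature.

Definition tau_term (t : term (sig_tau F)) : term (sig_tau F) :=
  @App (sig_tau F) None (fun _ => t).

Lemma interp_tau (B : algebra (sig_tau F)) (g : 'I_1 -> B) :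
  @interp _ B None g = tau_op (g ord0).
Proof.
by rewrite /tau_op; congr (interp _); apply: functional_extensionality => i;
   rewrite (ord1 i).
Qed.

Definition tau_hom_identity (f : F) : term (sig_tau F) * term (sig_tau F) :=
  (tau_term (@App (sig_tau F) (Some f) (fun i => Var _ (val i))),
   @App (sig_tau F) (Some f) (fun i => tau_term (Var _ (val i)))).

Definition tau_idem_identity : term (sig_tau F) * term (sig_tau F) :=
  (tau_term (tau_term (Var _ 0)), tau_term (Var _ 0)).

Lemma state_morphism_identitiesP (B : algebra (sig_tau F)) :
  is_state_morphism_algebra B <->
  (forall f, satisfies B (tau_hom_identity f)) /\ satisfies B tau_idem_identity.
Proof.
split=> [[hom idem]|[hom idem]]; first by split=> [f v|v]; [exact: hom|exact: idem].
split=> [f args|x]; last exact: (idem (fun _ => x)).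
(* [B] may have no element besides those built from [args], even when [arity f = 0]. *)
pose v n := if insub n is Some i then args i else @interp _ B (Some f) args.
have vE : (fun i : 'I_(arity f) => v (val i)) = args.
  by apply: functional_extensionality => i; rewrite /v valK.
rewrite /tau_op -vE; exact: hom f v.
Qed.

Lemma D_alg_state_morphism (A : algebra F) : is_state_morphism_algebra (D_alg A).
Proof. by []. Qed.

(** [split_term t] is the pair (t', t'') of F-terms computing t and tau t,
    where x_{2n} stands for x_n and x_{2n+1} for tau x_n. *)
Fixpoint split_term (t : term (sig_tau F)) : term F * term F :=
  match t with
  | Var n => (Var F (2 * n), Var F (2 * n).+1)
  | App o args =>
    match o as o0 return ('I_(@arity (sig_tau F) o0) -> term (sig_tau F)) -> _ with
    | Some f => fun args =>
        (@App F f (fun i => (split_term (args i)).1),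
         @App F f (fun i => (split_term (args i)).2))
    | None => fun args => ((split_term (args ord0)).2, (split_term (args ord0)).2)
    end args
  end.

Lemma eval_split_term (B : algebra (sig_tau F)) (v : nat -> B)
    (t : term (sig_tau F)) :
  is_state_morphism_algebra B ->
  let w n := if odd n then tau_op (v n./2) else v n./2 in
  eval v t = eval (A := reduct B) w (split_term t).1 /\
  tau_op (eval v t) = eval (A := reduct B) w (split_term t).2.
Proof.
move=> [hom idem] w; elim: t => [n|[f|] args IH] /=.
- by rewrite /w /= mul2n /= odd_double /= uphalf_double doubleK.
- split; last rewrite hom; congr (interp _);
    apply: functional_extensionality => i; [exact: (IH i).1|exact: (IH i).2].
- by rewrite interp_tau -(IH ord0).2 idem.
Qed.

Lemma eval_split_term_D (A : algebra F) (u : nat -> A) (t : term (sig_tau F)) :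
  let v n : D_alg A := (u (2 * n).+1, u (2 * n)) in
  (eval v t).2 = eval u (split_term t).1 /\ (eval v t).1 = eval u (split_term t).2.
Proof.
move=> v; elim: t => [n|[f|] args IH] //=; last by rewrite (IH ord0).2.
by split; congr (interp _); apply: functional_extensionality => i;
   [exact: (IH i).1|exact: (IH i).2].
Qed.

Fixpoint lift_term (t : term F) : term (sig_tau F) :=
  match t with
  | Var n => Var _ n
  | App f args => @App (sig_tau F) (Some f) (fun i => lift_term (args i))
  end.

Lemma eval_lift_term (B : algebra (sig_tau F)) (v : nat -> B) (t : term F) :
  eval v (lift_term t) = eval (A := reduct B) v t.
Proof.
elim: t => [n|f args IH] //=; congr (interp _).
exact: functional_extensionality.
Qed.

Lemma eval_lift_term_D (A : algebra F) (v : nat -> D_alg A) (t : term F) :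
  eval v (lift_term t) = (eval (fun n => (v n).1) t, eval (fun n => (v n).2) t).
Proof.
elim: t => [n|f args IH] /=; first by case: (v n).
by congr (_, _); congr (interp _); apply: functional_extensionality => i;
   rewrite IH.
Qed.

Variable K : alg_class F.

Lemma Id_D_class_split (s t : term (sig_tau F)) :
  Id_of (D_class K) (s, t) -> Id_of K ((split_term s).1, (split_term t).1).
Proof.
move=> hst A hA u /=.
have [<- _] := eval_split_term_D u s; have [<- _] := eval_split_term_D u t.
by rewrite (hst (D_alg A)) //; exists A.
Qed.

Lemma Id_D_class_lift (e : term F * term F) :
  Id_of K e -> Id_of (D_class K) (lift_term e.1, lift_term e.2).
Proof. by move=> he _ [A [hA ->]] v /=; rewrite !eval_lift_term_D !(he A hA). Qed.

Lemma Id_D_class_state_morphism (B : algebra (sig_tau F)) :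
  V_gen (D_class K) B -> is_state_morphism_algebra B.
Proof.
move=> hB; apply/state_morphism_identitiesP.
by split=> [f|]; apply: hB => _ [A [_ ->]];
   have /state_morphism_identitiesP[] := D_alg_state_morphism A.
Qed.

End StateMorphismTerms.

Theorem theorem4p4 (F : signature) (K V : alg_class F)
  (hV : forall A : algebra F, V A <-> V_gen K A) :
  forall B : algebra (sig_tau F), V_tau V B <-> V_gen (D_class K) B.
Proof.
move=> B; split.
- move=> [hB /hV hVB] [s t] hst v /=.
  have [-> _] := eval_split_term v s hB; have [-> _] := eval_split_term v t hB.
  exact: hVB _ (Id_D_class_split hst) _.
- move=> hB; split; first exact: Id_D_class_state_morphism hB.
  apply/hV => e he v; rewrite -!eval_lift_term.
  exact: hB _ (Id_D_class_lift he) v.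
Qed.
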